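(* Let $X$ be a set and $d$ an ultra-semimetric on $X$. Let $E$ be the group of all finite subsets of $X$ with an even number of elements, with symmetric difference as the group operation (identify $x\in X$ with $\{x\}$, so that $x-y=x+y=\{x,y\}\triangle\emptyset$ for $x\neq y$). For $u\in E$ let $\mathrm{Conf}(u)$ be the set of finite families $\omega=\{(x_1,x_2),\dots,(x_{2n-1},x_{2n})\}$ of pairs of elements of $X$ with $\{x_1\}\triangle\{x_2\}\triangle\cdots\triangle\{x_{2n}\}=u$, and set $\varphi(\omega)=\max_{1\le i\le n}d(x_{2i-1},x_{2i})$ and $\|u\|=\inf_{\omega\in\mathrm{Conf}(u)}\varphi(\omega)$. Then: (i) for $u\neq 0$ the infimum is attained, and equals the minimum of $\varphi(\omega)$ over configurations $\omega$ in which all $2n$ entries are pairwise distinct; (ii) $\|\cdot\|$ is an ultra-seminorm on $E$, i.e. $\|0\|=0$, $\|u\|=\|-u\|\ge0$ and $\|u+v\|\le\max\{\|u\|,\|v\|\}$; (iii) $\|x-y\|=d(x,y)$ for all $x,y\in X$.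
   Context: An ultra-semimetric on $X$ is a function $d:X\times X\to[0,\infty)$ with $d(x,x)=0$, $d(x,y)=d(y,x)$ and $d(x,z)\le\max\{d(x,y),d(y,z)\}$. *)

From Stdlib Require Import Reals List Classical ClassicalEpsilon.
Import ListNotations.
Open Scope R_scope.

Set Implicit Arguments.
Section Defs.
Variable X : Type.

Definition set_eq (u v : X -> Prop) : Prop := forall z, u z <-> v z.
Definition set0 : X -> Prop := fun _ => False.
Definition single (x : X) : X -> Prop := fun z => z = x.
Definition symd (u v : X -> Prop) : X -> Prop :=
  fun z => (u z /\ ~ v z) \/ (~ u z /\ v z).
(* additive inverse in E (every element has order 2, so -u = u) *)
Definition Eopp (u : X -> Prop) : X -> Prop := u.

Definition is_E (u : X -> Prop) : Prop :=
  exists l : list X, NoDup l /\ Nat.Even (length l) /\ forall z, u z <-> In z l.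

Fixpoint sym_sum (l : list X) : X -> Prop :=
  match l with
  | [] => set0
  | x :: l' => symd (single x) (sym_sum l')
  end.

Definition entries (w : list (X * X)) : list X :=
  concat (map (fun p => [fst p; snd p]) w).

Definition Conf (u : X -> Prop) (w : list (X * X)) : Prop :=
  set_eq (sym_sum (entries w)) u.

Variable d : X -> X -> R.

Definition ultra_semimetric : Prop :=
  (forall x y, 0 <= d x y) /\ (forall x, d x x = 0) /\
  (forall x y, d x y = d y x) /\
  (forall x y z, d x z <= Rmax (d x y) (d y z)).

(* phi(omega) = max_i d(x_{2i-1}, x_{2i}); empty max = 0 (distances are >= 0) *)
Definition phi (w : list (X * X)) : R :=
  fold_right (fun p m => Rmax (d (fst p) (snd p)) m) 0 w.

Definition is_glb (S : R -> Prop) (r : R) : Prop :=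
  (forall a, S a -> r <= a) /\ (forall b, (forall a, S a -> b <= a) -> b <= r).

Definition norm (u : X -> Prop) : R :=
  epsilon (inhabits 0)
    (fun r => is_glb (fun a => exists w, Conf u w /\ a = phi w) r).

End Defs.

From Stdlib Require Import Bool Arith Reals List Permutation Classical ClassicalEpsilon Lia Lra.
Import ListNotations.
Open Scope R_scope.

Set Implicit Arguments.
Unset Strict Implicit.

(* For a radius r and a point x, the parity of the number of entries of a
   configuration lying in the closed ball B(x, r) depends only on the set
   the configuration represents, since entries occurring twice cancel.  If
   every pair of the configuration has length at most r, this parity is even:
   by the ultrametric inequality both members of a pair lie in B(x, r) or both
   lie outside.  Conversely, a finite set meeting every r-ball centred at one
   of its points in an even number of points can be split into pairs of length
   at most r: the ball around a point a contains a, hence another point b, and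
   removing {a, b} keeps all these parities even.  So every configuration of u
   can be replaced, without increasing phi, by a pairing of the support of u;
   there are finitely many possible values of phi on such pairings, and the
   least of them is ||u||. *)

Lemma list_min_exists (V : list R) (P : R -> Prop) :
  (exists v, In v V /\ P v) ->
  exists v, In v V /\ P v /\ forall v', In v' V -> P v' -> v <= v'.
Proof.
  induction V as [|a V IH]; intros [v [Hv Pv]]; [destruct Hv|].
  destruct (classic (exists v, In v V /\ P v)) as [Hex|Hno].
  - destruct (IH Hex) as [m [Hm [Pm Hmin]]].
    destruct (classic (P a /\ a <= m)) as [[Pa Ham]|Ham].
    + exists a; split; [now left|split; [exact Pa|]].
      intros v' [<-|Hv'] Pv'; [lra|specialize (Hmin v' Hv' Pv'); lra].
    + exists m; split; [now right|split; [exact Pm|]].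
      intros v' [<-|Hv'] Pv'; [|exact (Hmin v' Hv' Pv')].
      assert (~ a <= m) by tauto; lra.
  - destruct Hv as [<-|Hv]; [|exfalso; apply Hno; eauto].
    exists a; split; [now left|split; [exact Pv|]].
    intros v' [<-|Hv'] Pv'; [lra|exfalso; apply Hno; eauto].
Qed.

Section Configurations.
Variable X : Type.

Definition parity (f : X -> bool) (l : list X) : bool :=
  fold_right (fun z b => xorb (f z) b) false l.

Lemma parity_cons f a l : parity f (a :: l) = xorb (f a) (parity f l).
Proof. reflexivity. Qed.

Lemma parity_app f l1 l2 : parity f (l1 ++ l2) = xorb (parity f l1) (parity f l2).
Proof.
  induction l1 as [|a l1 IH]; [reflexivity|].
  simpl app; rewrite !parity_cons, IH.
  now rewrite xorb_assoc_reverse.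
Qed.

Lemma parity_perm f l1 l2 : Permutation l1 l2 -> parity f l1 = parity f l2.
Proof.
  induction 1 as [| |a b l|]; rewrite ?parity_cons; try congruence.
  now destruct (f a), (f b).
Qed.

Lemma parity_witness f l : parity f l = true -> exists z, In z l /\ f z = true.
Proof.
  induction l as [|a l IH]; [discriminate|].
  rewrite parity_cons; destruct (f a) eqn:Ha; [now exists a; split; [left|]|].
  intros Hl; destruct (IH Hl) as [z [Hz Hfz]].
  now exists z; split; [right|].
Qed.

Lemma sym_sum_NoDup (l : list X) :
  NoDup l -> forall z, sym_sum l z <-> In z l.
Proof.
  induction 1 as [|a l Ha _ IH]; intros z; simpl; [unfold set0; tauto|].
  unfold symd, single; specialize (IH z).
  destruct (classic (z = a)) as [->|Hz]; [tauto|].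
  split; intros H; intuition congruence.
Qed.

Lemma sym_sum_app (l1 l2 : list X) z :
  sym_sum (l1 ++ l2) z <-> symd (sym_sum l1) (sym_sum l2) z.
Proof.
  induction l1 as [|a l1 IH]; simpl; unfold symd in *; [unfold set0; tauto|].
  rewrite IH; tauto.
Qed.

Lemma sym_sum_reduce (l : list X) :
  exists m, NoDup m /\ (forall z, sym_sum l z <-> In z m) /\
    forall f, parity f l = parity f m.
Proof.
  induction l as [|a l [m [Hm [Hmem Hpar]]]].
  { exists []; split; [constructor|]; split; [|reflexivity].
    simpl; unfold set0; tauto. }
  destruct (classic (In a m)) as [Ha|Ha].
  - destruct (in_split _ _ Ha) as [m1 [m2 ->]].
    pose proof (NoDup_remove_2 _ _ _ Hm) as Ha'.
    exists (m1 ++ m2); split; [exact (NoDup_remove_1 _ _ _ Hm)|split].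
    + intros z; simpl; unfold symd, single; rewrite Hmem, !in_app_iff; simpl.
      destruct (classic (z = a)) as [->|Hz]; [rewrite in_app_iff in Ha'; tauto|].
      intuition congruence.
    + intros f; rewrite parity_cons, Hpar, !parity_app, parity_cons.
      destruct (f a), (parity f m1), (parity f m2); reflexivity.
  - exists (a :: m); split; [now constructor|split].
    + intros z; simpl; unfold symd, single; rewrite Hmem.
      destruct (classic (z = a)) as [->|Hz]; [tauto|intuition congruence].
    + intros f; now rewrite !parity_cons, Hpar.
Qed.

Lemma parity_sym_sum l1 l2 :
  (forall z, sym_sum l1 z <-> sym_sum l2 z) -> forall f, parity f l1 = parity f l2.
Proof.
  intros H f.
  destruct (sym_sum_reduce l1) as [m1 [N1 [M1 P1]]].
  destruct (sym_sum_reduce l2) as [m2 [N2 [M2 P2]]].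
  rewrite P1, P2; apply parity_perm, NoDup_Permutation; [easy|easy|].
  intros z; now rewrite <- M1, <- M2.
Qed.

Lemma entries_app (w1 w2 : list (X * X)) :
  entries (w1 ++ w2) = entries w1 ++ entries w2.
Proof. unfold entries; now rewrite map_app, concat_app. Qed.

Lemma entries_of_even_length n (l : list X) :
  length l = (2 * n)%nat -> exists w, entries w = l.
Proof.
  revert l; induction n as [|n IH]; intros l Hl.
  - destruct l; [now exists []|discriminate].
  - destruct l as [|a [|b l]]; simpl in Hl; try lia.
    destruct (IH l) as [w Hw]; [lia|].
    exists ((a, b) :: w); simpl; now rewrite <- Hw.
Qed.

Lemma is_E_Conf (u : X -> Prop) : is_E u -> exists w, Conf u w.
Proof.
  intros [l [Hl [[n Hn] Hu]]].
  destruct (entries_of_even_length Hn) as [w Hw].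
  exists w; intros z; now rewrite Hw, sym_sum_NoDup, Hu.
Qed.

Lemma Conf_support (u : X -> Prop) w :
  Conf u w -> exists l, NoDup l /\ forall z, u z <-> In z l.
Proof.
  intros Hw; destruct (sym_sum_reduce (entries w)) as [l [Hl [Hmem _]]].
  exists l; split; [exact Hl|]; intros z; now rewrite <- Hmem, (Hw z).
Qed.

Lemma Conf_of_support (u : X -> Prop) l w :
  NoDup l -> (forall z, u z <-> In z l) -> Permutation (entries w) l ->
  Conf u w /\ NoDup (entries w).
Proof.
  intros Hl Hu Hw.
  assert (Hnd : NoDup (entries w)) by exact (Permutation_NoDup (Permutation_sym Hw) Hl).
  split; [|exact Hnd]; intros z.
  rewrite sym_sum_NoDup, Hu by exact Hnd.
  split; apply Permutation_in; [exact Hw|exact (Permutation_sym Hw)].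
Qed.

Lemma Conf_symd (u v : X -> Prop) w1 w2 :
  Conf u w1 -> Conf v w2 -> Conf (symd u v) (w1 ++ w2).
Proof.
  intros H1 H2 z; rewrite entries_app, sym_sum_app; unfold symd.
  now rewrite (H1 z), (H2 z).
Qed.

Lemma Conf_pair (x y : X) : Conf (symd (single x) (single y)) [(x, y)].
Proof. intros z; simpl; unfold symd, set0; tauto. Qed.

End Configurations.

Section UltraSeminorm.
Variables (X : Type) (d : X -> X -> R).

Definition close (r : R) (x z : X) : bool :=
  if Rle_dec (d x z) r then true else false.

Lemma close_le r x z : close r x z = true <-> d x z <= r.
Proof. unfold close; destruct (Rle_dec (d x z) r); intuition discriminate. Qed.

Lemma phi_nonneg w : 0 <= phi d w.
Proof.
  induction w as [|p w IH]; simpl; [lra|].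
  eapply Rle_trans; [exact IH|apply Rmax_r].
Qed.

Lemma phi_ge_pair w p : In p w -> d (fst p) (snd p) <= phi d w.
Proof.
  induction w as [|q w IH]; [easy|]; intros [<-|Hp]; simpl; [apply Rmax_l|].
  eapply Rle_trans; [exact (IH Hp)|apply Rmax_r].
Qed.

Lemma phi_lub w r :
  0 <= r -> (forall p, In p w -> d (fst p) (snd p) <= r) -> phi d w <= r.
Proof.
  induction w as [|q w IH]; simpl; intros Hr H; [exact Hr|].
  apply Rmax_lub; auto.
Qed.

Lemma phi_app w1 w2 : phi d (w1 ++ w2) = Rmax (phi d w1) (phi d w2).
Proof.
  induction w1 as [|p w1 IH].
  - symmetry; apply Rmax_right, phi_nonneg.
  - change (Rmax (d (fst p) (snd p)) (phi d (w1 ++ w2))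
            = Rmax (Rmax (d (fst p) (snd p)) (phi d w1)) (phi d w2)).
    now rewrite IH, Rmax_assoc.
Qed.

Definition pair_dists (l : list X) : list R :=
  0 :: map (fun p => d (fst p) (snd p)) (list_prod l l).

Lemma phi_in_pair_dists (l : list X) w :
  incl (entries w) l -> In (phi d w) (pair_dists l).
Proof.
  induction w as [|[a b] w IH]; intros Hw; [now left|].
  apply incl_cons_inv in Hw as [Ha Hw]; apply incl_cons_inv in Hw as [Hb Hw].
  change (In (Rmax (d a b) (phi d w)) (pair_dists l)).
  apply Rmax_case; [|exact (IH Hw)].
  right; apply in_map_iff; exists (a, b); split; [reflexivity|now apply in_prod].
Qed.

Lemma norm_of_glb (u : X -> Prop) r :
  is_glb (fun a => exists w, Conf u w /\ a = phi d w) r -> norm d u = r.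
Proof.
  intros [Hlow Hgreat]; unfold norm.
  destruct (epsilon_spec (inhabits 0)
    (is_glb (fun a => exists w, Conf u w /\ a = phi d w)) (ex_intro _ r (conj Hlow Hgreat)))
    as [Hlow' Hgreat'].
  apply Rle_antisym; auto.
Qed.

Hypothesis hd : ultra_semimetric d.

Lemma close_pair r x a b : d a b <= r -> close r x a = close r x b.
Proof.
  destruct hd as [_ [_ [Hsym Hultra]]]; intros Hab.
  apply eq_true_iff_eq; rewrite !close_le; split; intros Hx.
  - apply (Rle_trans _ _ _ (Hultra x a b)), Rmax_lub; assumption.
  - apply (Rle_trans _ _ _ (Hultra x b a)); rewrite (Hsym b a).
    apply Rmax_lub; assumption.
Qed.

Lemma close_self r x : 0 <= r -> close r x x = true.
Proof. destruct hd as [_ [Hxx _]]; rewrite close_le, Hxx; easy. Qed.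

Lemma parity_close_entries r x w :
  (forall p, In p w -> d (fst p) (snd p) <= r) -> parity (close r x) (entries w) = false.
Proof.
  induction w as [|p w IH]; intros Hw; [reflexivity|].
  change (entries (p :: w)) with (fst p :: snd p :: entries w).
  rewrite !parity_cons, IH by (intros q Hq; apply Hw; now right).
  rewrite (close_pair x (Hw p (or_introl eq_refl))).
  now rewrite xorb_false_r, xorb_nilpotent.
Qed.

Lemma parity_close_support (u : X -> Prop) l w x :
  NoDup l -> (forall z, u z <-> In z l) -> Conf u w ->
  parity (close (phi d w) x) l = false.
Proof.
  intros Hl Hu Hw.
  rewrite (@parity_sym_sum _ l (entries w)).
  - apply parity_close_entries; intros p; apply phi_ge_pair.
  - intros z; now rewrite sym_sum_NoDup, <- Hu, (Hw z).
Qed.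

Lemma pairing_of_even_balls r (l : list X) :
  0 <= r -> NoDup l -> (forall a, In a l -> parity (close r a) l = false) ->
  exists w, Permutation (entries w) l /\ forall p, In p w -> d (fst p) (snd p) <= r.
Proof.
  intros Hr; remember (length l) as n eqn:Hn; revert l Hn.
  induction n as [n IH] using (well_founded_induction lt_wf).
  intros [|a t] Hn Hl Heven; [now exists []|].
  assert (Hat : parity (close r a) t = true).
  { specialize (Heven a (or_introl eq_refl)).
    rewrite parity_cons, close_self in Heven by exact Hr.
    now destruct (parity (close r a) t). }
  destruct (parity_witness Hat) as [b [Hb Hab]]; apply close_le in Hab.
  destruct (in_split _ _ Hb) as [t1 [t2 ->]].
  assert (Hperm : Permutation (a :: t1 ++ b :: t2) (a :: b :: t1 ++ t2))
    by (apply perm_skip, Permutation_sym, Permutation_middle).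
  pose proof (Permutation_NoDup Hperm Hl) as Hl'.
  destruct (IH (length (t1 ++ t2))) with (l := t1 ++ t2) as [w [Hw Hwr]].
  - rewrite Hn; simpl; rewrite !length_app; simpl; lia.
  - reflexivity.
  - now inversion Hl' as [|? ? _ Hbt]; inversion Hbt.
  - intros c Hc.
    assert (Hc' : In c (a :: t1 ++ b :: t2))
      by (right; apply Permutation_in with (1 := Permutation_middle t1 t2 b); now right).
    specialize (Heven c Hc').
    rewrite (parity_perm _ Hperm), !parity_cons, (close_pair c Hab) in Heven.
    now rewrite <- xorb_assoc_reverse, xorb_nilpotent, xorb_false_l in Heven.
  - exists ((a, b) :: w); split.
    + simpl; apply Permutation_sym; rewrite Hperm.
      now apply perm_skip, perm_skip, Permutation_sym.
    + intros p [<-|Hp]; [exact Hab|exact (Hwr p Hp)].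
Qed.

Lemma pairing_of_support_le (u : X -> Prop) l w :
  NoDup l -> (forall z, u z <-> In z l) -> Conf u w ->
  exists w', Permutation (entries w') l /\ phi d w' <= phi d w.
Proof.
  intros Hl Hu Hw.
  destruct (pairing_of_even_balls (phi_nonneg w) Hl
              (fun a _ => parity_close_support a Hl Hu Hw)) as [w' [Hw' Hle]].
  exists w'; split; [exact Hw'|exact (phi_lub (phi_nonneg w) Hle)].
Qed.

Lemma norm_attained (u : X -> Prop) w0 :
  Conf u w0 ->
  exists w, Conf u w /\ NoDup (entries w) /\ norm d u = phi d w /\
    forall w', Conf u w' -> phi d w <= phi d w'.
Proof.
  intros Hw0; destruct (Conf_support Hw0) as [l [Hl Hu]].
  assert (Hdists : forall w, Permutation (entries w) l -> In (phi d w) (pair_dists l))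
    by (intros w Hw; apply phi_in_pair_dists; intros z; apply Permutation_in, Hw).
  destruct (list_min_exists (V := pair_dists l)
              (P := fun v => exists w, Permutation (entries w) l /\ phi d w = v))
    as [m [_ [[ws [Hws <-]] Hmin]]].
  { destruct (pairing_of_support_le Hl Hu Hw0) as [w' [Hw' _]].
    exists (phi d w'); split; [exact (Hdists w' Hw')|eauto]. }
  assert (Hopt : forall w, Conf u w -> phi d ws <= phi d w).
  { intros w Hw; destruct (pairing_of_support_le Hl Hu Hw) as [w' [Hw' Hle]].
    apply Rle_trans with (phi d w'); [|exact Hle].
    apply Hmin; [exact (Hdists w' Hw')|eauto]. }
  destruct (Conf_of_support Hl Hu Hws) as [Hcs Hns].
  exists ws; split; [exact Hcs|split; [exact Hns|split; [|exact Hopt]]].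
  apply norm_of_glb; split.
  - intros a [w [Hw ->]]; exact (Hopt w Hw).
  - intros b Hb; exact (Hb _ (ex_intro _ ws (conj Hcs eq_refl))).
Qed.

Lemma norm_le_phi (u : X -> Prop) w : Conf u w -> norm d u <= phi d w.
Proof.
  intros Hw; destruct (norm_attained Hw) as [ws [_ [_ [-> Hopt]]]].
  exact (Hopt w Hw).
Qed.

Lemma norm_nonneg (u : X -> Prop) w : Conf u w -> 0 <= norm d u.
Proof.
  intros Hw; destruct (norm_attained Hw) as [ws [_ [_ [-> _]]]].
  apply phi_nonneg.
Qed.

Lemma Conf_pair_phi_ge x y w :
  Conf (symd (single x) (single y)) w -> d x y <= phi d w.
Proof.
  intros Hw; destruct (classic (x = y)) as [<-|Hxy].
  { destruct hd as [_ [Hxx _]]; rewrite Hxx; apply phi_nonneg. }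
  assert (Hl : NoDup [x; y])
    by (constructor; [intros [H|[]]; congruence|repeat constructor; easy]).
  assert (Hu : forall z, symd (single x) (single y) z <-> In z [x; y])
    by (intros z; unfold symd, single; simpl; intuition congruence).
  pose proof (parity_close_support x Hl Hu Hw) as Hpar.
  rewrite !parity_cons, close_self in Hpar by apply phi_nonneg.
  apply close_le; now destruct (close (phi d w) x y).
Qed.

End UltraSeminorm.

Theorem mainTheorem13 (X : Type) (d : X -> X -> R) (hd : ultra_semimetric d) :
  (* (i) *)
  (forall u : X -> Prop, is_E u -> ~ set_eq u (@set0 X) ->
     (exists w, Conf u w /\ phi d w = norm d u) /\
     (exists w, Conf u w /\ NoDup (entries w) /\ phi d w = norm d u /\
        forall w', Conf u w' -> NoDup (entries w') -> phi d w <= phi d w')) /\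
  (* (ii) *)
  (norm d (@set0 X) = 0 /\
   (forall u, is_E u -> norm d u = norm d (Eopp u) /\ 0 <= norm d u) /\
   (forall u v, is_E u -> is_E v ->
      norm d (symd u v) <= Rmax (norm d u) (norm d v))) /\
  (* (iii) *)
  (forall x y : X, norm d (symd (single x) (single y)) = d x y).
Proof.
  assert (Hattained : forall u, is_E u -> exists w, Conf u w /\ NoDup (entries w) /\
            norm d u = phi d w /\ forall w', Conf u w' -> phi d w <= phi d w').
  { intros u Hu; destruct (is_E_Conf Hu) as [w0 Hw0]; exact (norm_attained hd Hw0). }
  assert (Hempty : Conf (@set0 X) []) by (intros z; simpl; tauto).
  split; [|split; [split; [|split]|]].
  - intros u Hu _; destruct (Hattained u Hu) as [w [Hw [Hnd [Hnorm Hopt]]]].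
    split; exists w; auto.
  - apply Rle_antisym; [exact (norm_le_phi hd Hempty)|exact (norm_nonneg hd Hempty)].
  - intros u Hu; split; [reflexivity|].
    destruct (is_E_Conf Hu) as [w Hw]; exact (norm_nonneg hd Hw).
  - intros u v Hu Hv.
    destruct (Hattained u Hu) as [w1 [Hw1 [_ [-> _]]]].
    destruct (Hattained v Hv) as [w2 [Hw2 [_ [-> _]]]].
    rewrite <- phi_app; exact (norm_le_phi hd (Conf_symd Hw1 Hw2)).
  - intros x y; apply Rle_antisym.
    + apply Rle_trans with (phi d [(x, y)]); [exact (norm_le_phi hd (Conf_pair x y))|].
      apply Rmax_lub; [apply Rle_refl|apply (proj1 hd)].
    + destruct (norm_attained hd (Conf_pair x y)) as [w [Hw [_ [-> _]]]].
      exact (Conf_pair_phi_ge hd Hw).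
Qed.
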